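(* Let $\mu>1$ be an integer upper bound, $d>1$ an arbitrary discount factor and $v\in\mathbb{Q}$ a threshold value. Then: (1) the comparison language with upper bound $\mu$, relation $\mathsf{R}$, discount factor $d$ and threshold $v$ is a safety language for $\mathsf{R}\in\{\le,\ge,=\}$; (2) it is a co-safety language for $\mathsf{R}\in\{<,>,\neq\}$.
   Context: For an infinite sequence $A=a_0a_1\dots$, $\mathrm{DS}(A,d)=\sum_{i\ge0}a_i/d^i$. The comparison language with upper bound $\mu$, relation $\mathsf{R}\in\{<,>,\le,\ge,=,\neq\}$, discount factor $d$ and threshold value $v$ is the set of infinite words $A$ over the alphabet $\Sigma=\{-\mu,\dots,\mu\}$ such that $\mathrm{DS}(A,d)\ \mathsf{R}\ v$. For a language $L\subseteq\Sigma^\omega$, a finite word $x\in\Sigma^*$ is a bad prefix for $L$ if $x\cdot y\notin L$ for all $y\in\Sigma^\omega$; $L$ is a safety language if every word not in $L$ has a bad prefix for $L$; $L$ is a co-safety language if its complement $\Sigma^\omega\setminus L$ is a safety language. *)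

From Stdlib Require Import Reals ZArith QArith List.
From Coquelicot Require Import Coquelicot.
Open Scope R_scope.

Definition Sigma (mu : Z) : Type := {z : Z | (- mu <= z <= mu)%Z}.

Definition letter_val {mu : Z} (a : Sigma mu) : Z := proj1_sig a.

Definition oword (mu : Z) : Type := nat -> Sigma mu.
Definition language (mu : Z) : Type := oword mu -> Prop.

Definition DS {mu : Z} (A : oword mu) (d : R) : R :=
  Series (fun i => IZR (letter_val (A i)) / d ^ i).

Inductive relation_sym : Type := RLt | RGt | RLe | RGe | REq | RNeq.

Definition rel_holds (r : relation_sym) (x y : R) : Prop :=
  match r with
  | RLt => x < y
  | RGt => x > y
  | RLe => x <= y
  | RGe => x >= y
  | REq => x = y
  | RNeq => x <> y
  end.

Definition comparison_language (mu : Z) (r : relation_sym) (d : R) (v : Q)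
  : language mu :=
  fun A => rel_holds r (DS A d) (Q2R v).

Definition concat {mu : Z} (x : list (Sigma mu)) (y : oword mu) : oword mu :=
  fun i => match nth_error x i with
           | Some a => a
           | None => y (i - length x)%nat
           end.

Definition prefix {mu : Z} (A : oword mu) (n : nat) : list (Sigma mu) :=
  map A (seq 0 n).

Definition bad_prefix {mu : Z} (L : language mu) (x : list (Sigma mu)) : Prop :=
  forall y : oword mu, ~ L (concat x y).

Definition safety {mu : Z} (L : language mu) : Prop :=
  forall A : oword mu, ~ L A -> exists n : nat, bad_prefix L (prefix A n).

Definition complement {mu : Z} (L : language mu) : language mu :=
  fun A => ~ L A.

Definition co_safety {mu : Z} (L : language mu) : Prop :=
  safety (complement L).

(** The discounted sum depends continuously on the word: two words over
    [{-mu, ..., mu}] sharing a prefix of length [n] have discounted sums at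
    distance at most [2 mu d^-n / (1 - 1/d)].  Hence if [DS A d] lies in an open
    set [U], some prefix of [A] already forces the discounted sum of every
    continuation into [U].  For [R] in [{<=, >=, =}] the set of values violating
    [R v] is open, giving bad prefixes for the language; for [R] in
    [{<, >, <>}] the set of values satisfying [R v] is open, giving bad
    prefixes for its complement. *)

From Pilot Require Import Defs.
From Stdlib Require Import Reals ZArith QArith List Lra Lia Classical.
From Coquelicot Require Import Coquelicot.
Open Scope R_scope.

Lemma Series_Rabs_le (a b : nat -> R) :
  (forall n, Rabs (a n) <= b n) -> ex_series b -> Rabs (Series a) <= Series b.
Proof.
  intros Hab Hb.
  assert (Habs : ex_series (fun n => Rabs (a n))).
  { apply (ex_series_le (V := R_CompleteNormedModule)) with (b := b); [|exact Hb].
    intros n. change (Rabs (Rabs (a n)) <= b n). rewrite Rabs_Rabsolu. apply Hab. }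
  eapply Rle_trans; [apply Series_Rabs, Habs|].
  apply Series_le; [|exact Hb].
  intros n. split; [apply Rabs_pos | apply Hab].
Qed.

Lemma ex_series_geom_scal (c q : R) : Rabs q < 1 -> ex_series (fun n => c * q ^ n).
Proof.
  intros Hq. apply (ex_series_scal_l (V := R_NormedModule) c (fun n => q ^ n)).
  now apply ex_series_geom.
Qed.

Lemma concat_prefix_lt (mu : Z) (A y : oword mu) (n i : nat) :
  (i < n)%nat -> Defs.concat (prefix A n) y i = A i.
Proof.
  intros Hi. unfold Defs.concat, prefix.
  rewrite nth_error_map, nth_error_seq.
  destruct (Nat.ltb_spec i n); [reflexivity | lia].
Qed.

Lemma Rabs_letter_val_le (mu : Z) (a : Sigma mu) : Rabs (IZR (letter_val a)) <= IZR mu.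
Proof.
  destruct a as [z Hz]; simpl.
  apply Rabs_le; split; rewrite <- ?opp_IZR; apply IZR_le; lia.
Qed.

Section DiscountedSum.

Variables (mu : Z) (d : R).
Hypothesis d_gt1 : 1 < d.

Let q := / d.

Lemma discount_bounds : 0 < q < 1.
Proof.
  unfold q. split; [apply Rinv_0_lt_compat; lra|].
  rewrite <- Rinv_1. apply Rinv_lt_contravar; lra.
Qed.

Lemma Rabs_discount_lt1 : Rabs q < 1.
Proof. pose proof discount_bounds. rewrite Rabs_pos_eq; lra. Qed.

Lemma Rabs_DS_term_le (A : oword mu) (i : nat) :
  Rabs (IZR (letter_val (A i)) / d ^ i) <= IZR mu * q ^ i.
Proof.
  pose proof discount_bounds as Hq. unfold q in *.
  unfold Rdiv. rewrite <- pow_inv, Rabs_mult, (Rabs_pos_eq (_ ^ i)).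
  - apply Rmult_le_compat_r; [apply pow_le; lra | apply Rabs_letter_val_le].
  - apply pow_le; lra.
Qed.

Lemma ex_series_DS (A : oword mu) :
  ex_series (fun i => IZR (letter_val (A i)) / d ^ i).
Proof.
  apply (ex_series_le (V := R_CompleteNormedModule)) with (b := fun i => IZR mu * q ^ i).
  - intros i. apply Rabs_DS_term_le.
  - apply ex_series_geom_scal, Rabs_discount_lt1.
Qed.

Lemma Rabs_DS_sub_le (A B : oword mu) (n : nat) :
  (forall i, (i < n)%nat -> A i = B i) ->
  Rabs (DS B d - DS A d) <= 2 * IZR mu / (1 - q) * q ^ n.
Proof.
  intros Hprefix.
  set (c i := IZR (letter_val (B i)) / d ^ i - IZR (letter_val (A i)) / d ^ i).
  assert (Hc : DS B d - DS A d = Series (fun k => c (n + k)%nat)).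
  { unfold DS. rewrite <- Series_minus by apply ex_series_DS.
    apply Series_incr_n_aux. intros k Hk. unfold c. rewrite (Hprefix k Hk). ring. }
  assert (Htail : forall k, Rabs (c (n + k)%nat) <= 2 * IZR mu * q ^ n * q ^ k).
  { intros k. unfold c. rewrite Rmult_assoc, <- pow_add.
    eapply Rle_trans; [apply Rabs_triang|]. rewrite Rabs_Ropp.
    pose proof (Rabs_DS_term_le A (n + k)). pose proof (Rabs_DS_term_le B (n + k)). lra. }
  rewrite Hc.
  eapply Rle_trans; [apply Series_Rabs_le with (1 := Htail)|].
  - apply ex_series_geom_scal, Rabs_discount_lt1.
  - rewrite Series_scal_l, Series_geom by apply Rabs_discount_lt1.
    unfold Rdiv. apply Req_le. ring.
Qed.

Lemma DS_prefix_locally (A : oword mu) (P : R -> Prop) :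
  locally (DS A d) P -> exists n, forall y, P (DS (Defs.concat (prefix A n) y) d).
Proof.
  intros [eps HP].
  assert (Hlim : is_lim_seq (fun n => 2 * IZR mu / (1 - q) * q ^ n) 0).
  { replace (Finite 0) with (Rbar_mult (2 * IZR mu / (1 - q)) 0)
      by (simpl; f_equal; ring).
    apply is_lim_seq_scal_l, is_lim_seq_geom, Rabs_discount_lt1. }
  apply is_lim_seq_spec in Hlim. destruct (Hlim eps) as [N HN].
  exists N. intros y. apply HP. change (Rabs (DS (Defs.concat (prefix A N) y) d - DS A d) < eps).
  eapply Rle_lt_trans.
  - apply (Rabs_DS_sub_le A _ N). intros i Hi. symmetry. now apply concat_prefix_lt.
  - specialize (HN N (Nat.le_refl N)). rewrite Rminus_0_r in HN.
    eapply Rle_lt_trans; [apply Rle_abs | exact HN].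
Qed.

Lemma safety_DS (P : R -> Prop) :
  open (fun x => ~ P x) -> safety (fun A : oword mu => P (DS A d)).
Proof.
  intros Hopen A HA. destruct (DS_prefix_locally A _ (Hopen _ HA)) as [n Hn].
  exists n. exact Hn.
Qed.

Lemma co_safety_DS (P : R -> Prop) :
  open P -> co_safety (fun A : oword mu => P (DS A d)).
Proof.
  intros Hopen A HA. apply NNPP in HA.
  destruct (DS_prefix_locally A _ (Hopen _ HA)) as [n Hn].
  exists n. intros y Hy. exact (Hy (Hn y)).
Qed.

End DiscountedSum.

Lemma open_not_rel_holds (r : relation_sym) (w : R) :
  r = RLe \/ r = RGe \/ r = REq -> open (fun x => ~ rel_holds r x w).
Proof.
  intros [-> | [-> | ->]]; simpl.
  - apply (open_ext (fun x => w < x)); [intros x; split; lra | apply open_gt].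
  - apply (open_ext (fun x => x < w)); [intros x; split; lra | apply open_lt].
  - apply open_neq.
Qed.

Lemma open_rel_holds (r : relation_sym) (w : R) :
  r = RLt \/ r = RGt \/ r = RNeq -> open (fun x => rel_holds r x w).
Proof. intros [-> | [-> | ->]]; [apply open_lt | apply open_gt | apply open_neq]. Qed.

Theorem theorem5 (mu : Z) (d : R) (v : Q) :
  (1 < mu)%Z -> 1 < d ->
  (forall r : relation_sym, (r = RLe \/ r = RGe \/ r = REq) ->
     safety (comparison_language mu r d v)) /\
  (forall r : relation_sym, (r = RLt \/ r = RGt \/ r = RNeq) ->
     co_safety (comparison_language mu r d v)).
Proof.
  intros _ Hd. split; intros r Hr.
  - apply (safety_DS mu d Hd (fun x => rel_holds r x (Q2R v))), open_not_rel_holds, Hr.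
  - apply (co_safety_DS mu d Hd (fun x => rel_holds r x (Q2R v))), open_rel_holds, Hr.
Qed.
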